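(* Let $X,Y$ be Banach spaces and let $u$ be an extreme point of $B_{X\widehat{\otimes}_\pi Y}$. Suppose $u\in\mathrm{INA}_\pi(X\widehat{\otimes}_\pi Y)$ is witnessed by a Radon measure. Then $u$ is an elementary tensor, i.e. $u=x_0\otimes y_0$ for some $x_0\in X$, $y_0\in Y$.
   Context: A positive Borel measure on a Hausdorff space is Radon if it is finite and inner regular by compact sets and outer regular by open sets. Definition: $u\in X\widehat{\otimes}_\pi Y$ is an integral projective norm-attaining tensor, written $u\in\mathrm{INA}_\pi(X\widehat{\otimes}_\pi Y)$, if there is a finite positive Borel measure $\mu$ on $B_X\times B_Y$ (norm topology) such that $\varphi:B_X\times B_Y\to X\widehat{\otimes}_\pi Y$, $\varphi(x,y)=x\otimes y$, is $\mu$-Bochner integrable, $u=\int_{B_X\times B_Y}x\otimes y\,d\mu(x,y)$ (Bochner integral) and $\|\mu\|=\|u\|_\pi$; then $u$ is said to be witnessed by $\mu$. *)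

From HB Require Import structures.
From mathcomp Require Import all_boot all_order all_algebra.
From mathcomp Require Import all_classical all_reals all_analysis.
Set Implicit Arguments. Unset Strict Implicit. Unset Printing Implicit Defensive.
Import Order.TTheory GRing.Theory Num.Theory.
Import numFieldNormedType.Exports.
Local Open Scope classical_set_scope.
Local Open Scope ring_scope.

Section Defs.
Context {R : realType}.

Definition bilinear_map (X Y W : normedModType R) (B : X -> Y -> W) : Prop :=
  (forall (a : R) (x1 x2 : X) (y : Y), B (a *: x1 + x2) y = a *: B x1 y + B x2 y) /\
  (forall (a : R) (x : X) (y1 y2 : Y), B x (a *: y1 + y2) = a *: B x y1 + B x y2).

Definition linear_map (Z W : normedModType R) (T : Z -> W) : Prop :=
  forall (a : R) (z1 z2 : Z), T (a *: z1 + z2) = a *: T z1 + T z2.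

(* ---------- Projective tensor product, via its universal property ----------
   [is_proj_tensor t] : the Banach space Z together with the bilinear map
   t (x, y) |-> x (x) y is (isometrically) the completed projective tensor
   product X \hat\otimes_\pi Y.  *)
Definition is_proj_tensor (X Y Z : completeNormedModType R) (t : X -> Y -> Z) : Prop :=
  bilinear_map t /\
  (forall x y, `|t x y| <= `|x| * `|y|) /\
  forall (W : completeNormedModType R) (B : X -> Y -> W),
    bilinear_map B ->
    (exists c : R, forall x y, `|B x y| <= c * (`|x| * `|y|)) ->
    exists T : Z -> W,
      [/\ linear_map T, continuous T,
          (forall x y, T (t x y) = B x y),
          (forall c : R, 0 <= c -> (forall x y, `|B x y| <= c * (`|x| * `|y|)) ->
                         forall z, `|T z| <= c * `|z|) &
          (forall T' : Z -> W, linear_map T' -> continuous T' ->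
                (forall x y, T' (t x y) = B x y) -> T' = T)].

Definition extreme_point_unit_ball (Z : normedModType R) (u : Z) : Prop :=
  `|u| <= 1 /\
  forall (a b : Z) (s : R), 0 < s < 1 -> `|a| <= 1 -> `|b| <= 1 ->
    u = s *: a + (1 - s) *: b -> a = b.

Definition BXY (X Y : normedModType R) : set (X * Y)%type :=
  [set p | `|p.1| <= 1 /\ `|p.2| <= 1].
Arguments BXY : clear implicits.

Lemma BXY0 (X Y : normedModType R) : BXY X Y (0, 0).
Proof. by rewrite /BXY /= !normr0; split; exact: ler01. Qed.

End Defs.
Arguments BXY {R} X Y.

HB.instance Definition _ (R : realType) (X Y : normedModType R) :=
  isPointed.Build (set_type (BXY X Y)) (exist _ (0, 0) (mem_set (BXY0 X Y))).

(* the Borel measurable space on B_X x B_Y (norm = product topology,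
   restricted to the subset) *)
Notation BorelBXY X Y := (g_sigma_algebraType (@open (set_type (BXY X Y)))).

Section Defs2.
Context {R : realType}.
Local Open Scope ereal_scope.

Definition radon_measure (X Y : normedModType R)
    (mu : {measure set (BorelBXY X Y) -> \bar R}) : Prop :=
  [/\ mu setT < +oo,
      (forall A : set (BorelBXY X Y), measurable A ->
         mu A = ereal_sup [set mu K | K in
                  [set K : set (set_type (BXY X Y)) | compact K /\ K `<=` A]]) &
      (forall A : set (BorelBXY X Y), measurable A ->
         mu A = ereal_inf [set mu U | U in
                  [set U : set (set_type (BXY X Y)) | open U /\ A `<=` U]])].

Section Bochner.
Context d (T : measurableType d) (Z : normedModType R).

Definition simple_eval (s : seq (set T * Z)) (x : T) : Z :=
  (\sum_(p <- s) (\1_(p.1) x : R) *: p.2)%R.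

Definition simple_valid (mu : {measure set T -> \bar R}) (s : seq (set T * Z)) : Prop :=
  forall p, p \in s -> measurable p.1 /\ mu p.1 < +oo.

Definition simple_int (mu : {measure set T -> \bar R}) (s : seq (set T * Z)) : Z :=
  (\sum_(p <- s) fine (mu p.1) *: p.2)%R.

Definition bochner_integral (mu : {measure set T -> \bar R}) (f : T -> Z) (u : Z) : Prop :=
  exists s : nat -> seq (set T * Z),
    [/\ forall n, simple_valid mu (s n),
        forall n, measurable_fun setT (fun x => `|f x - simple_eval (s n) x|%R),
        (fun n => \int[mu]_x (`|f x - simple_eval (s n) x|%R)%:E) @ \oo --> 0 &
        (fun n => simple_int mu (s n)) @ \oo --> u].
End Bochner.

Definition INA_witness (X Y Z : completeNormedModType R) (t : X -> Y -> Z)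
    (mu : {measure set (BorelBXY X Y) -> \bar R}) (u : Z) : Prop :=
  [/\ mu setT < +oo,
      bochner_integral mu (fun p : BorelBXY X Y => t (sval p).1 (sval p).2) u &
      mu setT = (`|u|%R)%:E].

End Defs2.

(* Since mu is inner regular by compact sets and has positive mass, it has a
   support point p: every neighbourhood of p has positive measure.  On a small
   ball E around p the integrand x (x) y stays within e of p.1 (x) p.2.  If
   m = mu E, the Bochner integrals over E and over its complement split u into
   two vectors of norms at most m and 1 - m; since u is an extreme point of
   norm 1, the first one must be m u.  Hence m u is within m e of
   m (p.1 (x) p.2), that is |u - p.1 (x) p.2| <= e for every e > 0. *)

From HB Require Import structures.
From mathcomp Require Import all_boot all_order all_algebra.
From mathcomp Require Import all_classical all_reals all_analysis.
From mathcomp Require Import measurable_realfun.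
Import Order.TTheory GRing.Theory Num.Theory.
Import numFieldNormedType.Exports.
Local Open Scope classical_set_scope.
Local Open Scope ring_scope.

Lemma hausdorff_of_continuous_inj {S T : topologicalType} (g : S -> T) :
  continuous g -> injective g -> hausdorff_space T -> hausdorff_space S.
Proof.
rewrite !open_hausdorff => cg ig hT x y xy.
have gxy : g x != g y by rewrite (inj_eq ig).
have [[A B] /= [Ax By] [oA oB /eqP AB0]] := hT _ _ gxy.
exists (g @^-1` A, g @^-1` B) => /=.
  by rewrite !inE; rewrite !inE in Ax By.
split; [exact: open_comp | exact: open_comp |].
by apply/eqP; rewrite -preimage_setI AB0 preimage_set0.
Qed.

Section support_point.
Context {R : realType} (S : ptopologicalType).
Local Notation B := (g_sigma_algebraType (@open S)).
Variable mu : {measure set B -> \bar R}.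

Lemma compact_measurable (K : set S) :
  hausdorff_space S -> compact K -> measurable (K : set B).
Proof.
move=> hS cK; rewrite -[K]setCK; apply: measurableC; apply: sub_sigma_algebra.
exact: closed_openC (compact_closed hS cK).
Qed.

Lemma compact_measure0 (K : set S) : hausdorff_space S ->
  (forall p : S, exists U : set S, [/\ open U, U p & mu U = 0%E]) ->
  compact K -> mu K = 0%E.
Proof.
move=> hS null cK; have [V Vnull] := boolp.choice null.
have oV p : open (V p) by case: (Vnull p).
have Vp p : V p p by case: (Vnull p).
have mV p : measurable (V p : set B) by exact: sub_sigma_algebra.
have cover_cK : cover_compact K by rewrite -compact_cover.
have [D _ KD] := cover_cK _ setT V (fun p _ => oV p) (fun p _ => ex_intro2 _ _ p I (Vp p)).
apply/eqP; rewrite eq_le measure_ge0 andbT.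
move: KD; rewrite /cover bigcup_fset => KD.
apply: le_trans (le_measure mu _ _ KD) _; rewrite ?inE.
- exact: compact_measurable.
- exact: bigsetU_measurable.
elim: (finmap.enum_fset D) => [|p l IH]; first by rewrite big_nil measure0.
have mU : measurable (\big[setU/set0]_(q <- l) V q : set B).
  exact: bigsetU_measurable.
have Vp0 : mu (V p) = 0%E by case: (Vnull p).
by rewrite big_cons setUC; move: (@measureU0 _ _ _ mu _ _ mU (mV p) Vp0) => /= ->.
Qed.

Lemma exists_support_point : hausdorff_space S -> (0 < mu setT)%E ->
  mu setT = ereal_sup [set mu K | K in [set K : set S | compact K /\ K `<=` setT]] ->
  exists p : S, forall U : set S, open U -> U p -> (0 < mu U)%E.
Proof.
move=> hS muT0 inner; apply: contrapT => /forallNP nosupp.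
suff : (mu setT <= 0)%E by rewrite leNgt muT0.
rewrite inner; apply: ge_ereal_sup => _ [K [cK _] <-].
rewrite (@compact_measure0 K hS _ cK) // => p.
have /existsNP [U /not_implyP [oU /not_implyP [Up /negP]]] := nosupp p.
by rewrite lt_neqAle measure_ge0 andbT negbK => /eqP mU0; exists U.
Qed.

End support_point.

Section bochner_restriction.
Context {R : realType} {d} {T : measurableType d} {Z : completeNormedModType R}.
Variable mu : {measure set T -> \bar R}.
Hypothesis mu_fin : (mu setT < +oo)%E.

Lemma fin_num_measure (A : set T) : measurable A -> mu A \is a fin_num.
Proof.
move=> mA; rewrite ge0_fin_numE ?measure_ge0//; apply: le_lt_trans mu_fin.
by apply: le_measure; rewrite ?inE.
Qed.

Definition simple_measurable (s : seq (set T * Z)) :=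
  forall p, p \in s -> measurable p.1.

Definition simple_int_on (E : set T) (s : seq (set T * Z)) : Z :=
  \sum_(p <- s) fine (mu (p.1 `&` E)) *: p.2.

Lemma simple_measurable_cons {A z s} :
  simple_measurable ((A, z) :: s) -> measurable A /\ simple_measurable s.
Proof.
move=> ms; split; first exact: (ms (A, z) (mem_head _ _)).
by move=> p ps; apply: ms; rewrite in_cons ps orbT.
Qed.

Lemma measurable_norm_simple_eval s w : simple_measurable s ->
  measurable_fun setT (fun x => `|w + simple_eval s x|).
Proof.
elim: s w => [|[A z] s IH] w ms.
  by under eq_fun do rewrite /simple_eval big_nil addr0; exact: measurable_cst.
have [mA ms'] := simple_measurable_cons ms.
have -> : (fun x => `|w + simple_eval ((A, z) :: s) x|) = (fun x =>
    \1_A x * `|(w + z) + simple_eval s x| + (1 - \1_A x) * `|w + simple_eval s x|).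
  apply/funext => x; rewrite /simple_eval big_cons /= indicE.
  case: (x \in A) => /=.
    by rewrite scale1r mul1r subrr mul0r addr0 addrA.
  by rewrite scale0r add0r mul0r subr0 mul1r add0r.
apply: measurable_funD; apply: measurable_funM; try exact: IH.
  exact: measurable_indic.
by apply: measurable_funB; [exact: measurable_cst | exact: measurable_indic].
Qed.

Lemma simple_int_onDI s E A : simple_measurable s -> measurable E -> measurable A ->
  simple_int_on E s = simple_int_on (E `&` A) s + simple_int_on (E `\` A) s.
Proof.
move=> ms mE mA; rewrite /simple_int_on -big_split /=.
apply: eq_big_seq => -[B z] /ms /= mB; rewrite -scalerDl; congr (_ *: _).
rewrite -fineD ?fin_num_measure //; last 2 first.
- by apply: measurableI => //; apply: measurableI.
- by apply: measurableI => //; apply: measurableD.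
by rewrite (measureDI mu (measurableI _ _ mB mE) mA) addeC setIA setIDA.
Qed.

(* The shift [w] makes the induction on [s] go through: on [A] the head pair
   of the list is absorbed into it. *)
Lemma norm_simple_int_on_le s E w : simple_measurable s -> measurable E ->
  (`|fine (mu E) *: w + simple_int_on E s|%:E
     <= \int[mu]_(x in E) (`|w + simple_eval s x|)%:E)%E.
Proof.
elim: s E w => [|[A z] s IH] E w ms mE.
  under eq_integral do rewrite /simple_eval big_nil addr0.
  rewrite /simple_int_on big_nil addr0 integral_cst // normrZ.
  by rewrite ger0_norm ?fine_ge0 ?measure_ge0 // EFinM fineK ?fin_num_measure // muleC.
have [mA ms'] := simple_measurable_cons ms.
have mEA : measurable (E `&` A) by exact: measurableI.
have mEnA : measurable (E `\` A) by exact: measurableD.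
have -> : fine (mu E) *: w + simple_int_on E ((A, z) :: s) =
    (fine (mu (E `&` A)) *: (w + z) + simple_int_on (E `&` A) s) +
    (fine (mu (E `\` A)) *: w + simple_int_on (E `\` A) s).
  rewrite /simple_int_on big_cons /= -/(simple_int_on E s).
  rewrite (simple_int_onDI s E A ms' mE mA) setIC.
  rewrite (measureDI mu mE mA) fineD ?fin_num_measure // scalerDl scalerDr.
  rewrite [_ *: w + _ *: w]addrC -!addrA; congr (_ + _).
  by rewrite [LHS]addrCA; congr (_ + _); exact: addrCA.
have EU : E = (E `&` A) `|` (E `\` A) by rewrite setDE -setIUr setUCr setIT.
rewrite [in leRHS]EU integral_setU //; first last.
- by apply/disj_setPS => x [[_ Ax] [_ nAx]].
- apply/measurable_EFinP; apply: (measurable_funS measurableT) => //.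
  exact: measurable_norm_simple_eval.
have shift_in : (\int[mu]_(x in E `&` A) (`|w + simple_eval ((A, z) :: s) x|)%:E =
    \int[mu]_(x in E `&` A) (`|(w + z) + simple_eval s x|)%:E)%E.
  apply: eq_integral => x; rewrite inE => -[_ Ax].
  by rewrite /simple_eval big_cons /= indicE (mem_set Ax) scale1r addrA.
have shift_out : (\int[mu]_(x in E `\` A) (`|w + simple_eval ((A, z) :: s) x|)%:E =
    \int[mu]_(x in E `\` A) (`|w + simple_eval s x|)%:E)%E.
  apply: eq_integral => x; rewrite inE => -[_ nAx].
  by rewrite /simple_eval big_cons /= indicE memNset // scale0r add0r.
rewrite shift_in shift_out.
apply: le_trans _ (leeD (IH _ _ ms' mEA) (IH _ _ ms' mEnA)).
by rewrite -EFinD lee_fin ler_normD.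
Qed.

Lemma integral_le_add (E : set T) (g h1 h2 : T -> R) : measurable E ->
  measurable_fun setT g -> measurable_fun setT h1 -> measurable_fun setT h2 ->
  (forall x, 0 <= g x) -> (forall x, 0 <= h1 x) -> (forall x, 0 <= h2 x) ->
  (forall x, E x -> g x <= h1 x + h2 x) ->
  (\int[mu]_(x in E) (g x)%:E <=
     \int[mu]_(x in E) (h1 x)%:E + \int[mu]_(x in E) (h2 x)%:E)%E.
Proof.
move=> mE mg mh1 mh2 g0 h10 h20 gh.
have mE_ (k : T -> R) : measurable_fun setT k -> measurable_fun E (EFin \o k).
  by move=> mk; apply/measurable_EFinP; exact: (measurable_funS measurableT).
have ge0E (k : T -> R) : (forall x, 0 <= k x) -> forall x, E x -> (0 <= (k x)%:E)%E.
  by move=> k0 x _; rewrite lee_fin.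
rewrite -ge0_integralD //; try exact: ge0E; try exact: mE_.
apply: ge0_le_integral => //; [exact: ge0E | exact: mE_ |].
by apply: emeasurable_funD; exact: mE_.
Qed.

Lemma integral_le_integralT (E : set T) (g : T -> R) : measurable E ->
  measurable_fun setT g -> (forall x, 0 <= g x) ->
  (\int[mu]_(x in E) (g x)%:E <= \int[mu]_x (g x)%:E)%E.
Proof.
move=> mE mg g0; apply: ge0_subset_integral => //.
- exact/measurable_EFinP.
- by move=> x _; rewrite lee_fin.
Qed.

Section approximating_sequence.

Variables (f : T -> Z) (s : nat -> seq (set T * Z)).
Hypothesis s_meas : forall n, simple_measurable (s n).
Hypothesis err_meas : forall n, measurable_fun setT (fun x => `|f x - simple_eval (s n) x|).
Let err n := (\int[mu]_x (`|f x - simple_eval (s n) x|)%:E)%E.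
Hypothesis err_cvg0 : err n @[n --> \oo] --> 0%E.

Lemma simple_int_on_approx E z c n : measurable E -> 0 <= c ->
  (forall x, E x -> `|f x - z| <= c) ->
  (`|simple_int_on E (s n) - fine (mu E) *: z|%:E <= (c * fine (mu E))%:E + err n)%E.
Proof.
move=> mE c0 fz.
have := norm_simple_int_on_le (s n) E (- z) (s_meas n) mE.
rewrite scalerN addrC => /le_trans; apply.
have pointwise x : E x -> `|- z + simple_eval (s n) x| <= `|f x - simple_eval (s n) x| + c.
  move=> Ex; rewrite addrC; apply: le_trans (ler_distD (f x) _ _) _.
  by rewrite distrC lerD2l; exact: fz.
apply: le_trans (integral_le_add _ _ _ _ mE (measurable_norm_simple_eval (s n) (- z) (s_meas n))
  (err_meas n) (measurable_cst c) (fun _ => normr_ge0 _) (fun _ => normr_ge0 _)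
  (fun _ => c0) pointwise) _.
rewrite addeC; apply: leeD; last exact: integral_le_integralT.
have := integral_cst mu mE c%:E; rewrite /cst => ->.
by rewrite EFinM fineK ?fin_num_measure.
Qed.

Lemma simple_int_on_cauchy E n m : measurable E ->
  (`|simple_int_on E (s n) - simple_int_on E (s m)|%:E <= err n + err m)%E.
Proof.
move=> mE; pose l := s n ++ [seq (p.1, - p.2) | p <- s m].
have ml : simple_measurable l.
  by move=> p; rewrite mem_cat => /orP[/s_meas | /mapP[q /s_meas mq ->]].
have int_l : simple_int_on E l = simple_int_on E (s n) - simple_int_on E (s m).
  rewrite /simple_int_on big_cat big_map -sumrN.
  by congr (_ + _); apply: eq_bigr => p _; rewrite scalerN.
have eval_l x : simple_eval l x = simple_eval (s n) x - simple_eval (s m) x.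
  rewrite /simple_eval big_cat big_map -sumrN.
  by congr (_ + _); apply: eq_bigr => p _; rewrite scalerN.
have := norm_simple_int_on_le l E 0 ml mE.
rewrite scaler0 add0r int_l => /le_trans; apply.
have pointwise x : E x -> `|0 + simple_eval l x| <=
    `|f x - simple_eval (s n) x| + `|f x - simple_eval (s m) x|.
  by move=> _; rewrite add0r eval_l; apply: le_trans (ler_distD (f x) _ _) _; rewrite distrC.
apply: le_trans (integral_le_add _ _ _ _ mE (measurable_norm_simple_eval l 0 ml)
  (err_meas n) (err_meas m) (fun _ => normr_ge0 _) (fun _ => normr_ge0 _)
  (fun _ => normr_ge0 _) pointwise) _.
by apply: leeD; exact: integral_le_integralT.
Qed.

Lemma err_lt_near {e : R} : 0 < e -> \forall n \near \oo, (err n < e%:E)%E.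
Proof.
move=> e0; have [err_fin err_fine_cvg] := proj1 (fine_cvgP _ _) err_cvg0.
have err_small := proj1 (cvgrPdist_lt _ _) err_fine_cvg e e0.
near=> n.
have errn_fin : err n \is a fin_num by near: n; exact: err_fin.
have errn_lt : `|0 - fine (err n)| < e by near: n; exact: err_small.
rewrite -(fineK errn_fin) lte_fin.
by apply: le_lt_trans errn_lt; rewrite sub0r normrN ler_norm.
Unshelve. all: by end_near.
Qed.

Definition bochner_on (E : set T) : Z := lim (simple_int_on E (s n) @[n --> \oo]).

Lemma bochner_on_cvg E : measurable E ->
  simple_int_on E (s n) @[n --> \oo] --> bochner_on E.
Proof.
move=> mE; apply: cauchy_cvg; apply: cauchy_exP => e e0.
have e2 : 0 < e / 2 by rewrite divr_gt0.
have [N _ errN] := err_lt_near e2.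
exists (simple_int_on E (s N)); exists N => // n /= Nn.
rewrite -ball_normE /= -lte_fin; apply: le_lt_trans (simple_int_on_cauchy E N n mE) _.
by rewrite [e]splitr EFinD; apply: lteD; apply: errN => /=.
Qed.

Lemma norm_bochner_on_sub_le E z c : measurable E -> 0 <= c ->
  (forall x, E x -> `|f x - z| <= c) ->
  `|bochner_on E - fine (mu E) *: z| <= c * fine (mu E).
Proof.
move=> mE c0 fz; apply/ler_addgt0Pr => e e0.
have e2 : 0 < e / 2 by rewrite divr_gt0.
have [N1 _ close] := proj1 (cvgrPdist_lt _ _) (bochner_on_cvg _ mE) _ e2.
have [N2 _ errN] := err_lt_near e2.
pose n := maxn N1 N2.
have h1 : `|bochner_on E - simple_int_on E (s n)| < e / 2 by apply: close; rewrite /= leq_maxl.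
have h2 : `|simple_int_on E (s n) - fine (mu E) *: z| < c * fine (mu E) + e / 2.
  rewrite -lte_fin EFinD; apply: le_lt_trans (simple_int_on_approx _ _ _ n mE c0 fz) _.
  by rewrite lteD2lE //; apply: errN; rewrite /= leq_maxr.
apply: le_trans (ler_distD (simple_int_on E (s n)) _ _) _.
by apply/ltW/(lt_le_trans (ltrD h1 h2)); rewrite addrCA -splitr.
Qed.

Lemma bochner_on_add_setC E u : measurable E ->
  simple_int mu (s n) @[n --> \oo] --> u -> bochner_on E + bochner_on (~` E) = u.
Proof.
move=> mE s_cvg.
have split_n n : simple_int mu (s n) = simple_int_on E (s n) + simple_int_on (~` E) (s n).
  have := simple_int_onDI (s n) setT E (s_meas n) measurableT mE.
  rewrite setTI setTD => <-.
  by rewrite /simple_int_on /simple_int; apply: eq_bigr => p _; rewrite setIT.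
have sum_cvg : simple_int mu (s n) @[n --> \oo] --> bochner_on E + bochner_on (~` E).
  rewrite (funext split_n); apply: cvgD; apply: bochner_on_cvg => //; exact: measurableC.
exact: cvg_unique sum_cvg s_cvg.
Qed.

End approximating_sequence.

End bochner_restriction.

Section extreme_point.
Context {R : realType} {Z : normedModType R}.
Implicit Types (u a b : Z) (m : R).

Lemma extreme_point_unit_ball_norm u :
  extreme_point_unit_ball u -> u != 0 -> `|u| = 1.
Proof.
move=> [u1 uext] u0; set r := `|u|; have r0 : 0 < r by rewrite normr_gt0.
apply/eqP; rewrite eq_le u1 leNgt /=; apply/negP => r1.
have ua : `|r^-1 *: u| <= 1.
  by rewrite normrZ ger0_norm ?invr_ge0 ?(ltW r0) // mulVf ?gt_eqF.
have u_split : u = r *: (r^-1 *: u) + (1 - r) *: 0.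
  by rewrite scaler0 addr0 scalerA mulfV ?gt_eqF // scale1r.
have r01 : 0 < r < 1 by rewrite r0 r1.
have zero_ball : `|0 : Z| <= 1 by rewrite normr0.
have /eqP := uext _ _ _ r01 ua zero_ball u_split.
by rewrite scaler_eq0 invr_eq0 normr_eq0 orbb (negPf u0).
Qed.

Lemma extreme_point_unit_ball_split u a b m : extreme_point_unit_ball u ->
  0 < m <= 1 -> `|a| <= m -> `|b| <= 1 - m -> u = a + b -> a = m *: u.
Proof.
move=> [_ uext] /andP[m0 m1] am bm uab.
have [m_lt1|m_ge1] := ltP m 1; last first.
  have m_eq1 : m = 1 by apply/eqP; rewrite eq_le m1.
  move: bm; rewrite m_eq1 subrr normr_le0 => /eqP b0.
  by rewrite uab b0 addr0 scale1r.
have m'0 : 0 < 1 - m by rewrite subr_gt0.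
have unit_ball (k : R) (v : Z) : 0 < k -> `|v| <= k -> `|k^-1 *: v| <= 1.
  by move=> k0 vk; rewrite normrZ ger0_norm ?invr_ge0 ?(ltW k0) // ler_pdivrMl // mulr1.
have scaleK (k : R) (v : Z) : 0 < k -> k *: (k^-1 *: v) = v.
  by move=> k0; rewrite scalerA mulfV ?gt_eqF // scale1r.
have u_split : u = m *: (m^-1 *: a) + (1 - m) *: ((1 - m)^-1 *: b).
  by rewrite !scaleK.
have m01 : 0 < m < 1 by rewrite m0 m_lt1.
have ab := uext _ _ m m01 (unit_ball _ _ m0 am) (unit_ball _ _ m'0 bm) u_split.
by rewrite u_split -ab -scalerDl addrC subrK scale1r scaleK.
Qed.

End extreme_point.

Lemma extreme_point_bochner_dist_le {R : realType} {d} {T : measurableType d}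
    {Z : completeNormedModType R} (mu : {measure set T -> \bar R})
    (f : T -> Z) (u z : Z) (E : set T) (c : R) :
  extreme_point_unit_ball u -> mu setT = 1%:E -> (forall x, `|f x| <= 1) ->
  bochner_integral mu f u -> measurable E -> (0 < mu E)%E -> 0 <= c ->
  (forall x, E x -> `|f x - z| <= c) -> `|u - z| <= c.
Proof.
move=> uext mu1 f1 [s [s_valid err_meas err_cvg0 s_cvg]] mE muE0 c0 fz.
have mu_fin : (mu setT < +oo)%E by rewrite mu1 ltry.
have s_meas n : simple_measurable (s n) by move=> p /(s_valid n) [].
have mEC : measurable (~` E) by exact: measurableC.
have E_fin := fin_num_measure mu mu_fin E mE.
have bochner_bound := norm_bochner_on_sub_le mu mu_fin _ _ s_meas err_meas err_cvg0.
set m := fine (mu E).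
have m0 : 0 < m by rewrite -lte_fin fineK.
have muEC : fine (mu (~` E)) = 1 - m.
  have -> : mu (~` E) = (1 - mu E)%E by rewrite -setTD measureD // setTI -mu1.
  by rewrite fineB.
have m1 : m <= 1.
  by rewrite -subr_ge0 -muEC fine_ge0 // measure_ge0.
have bochner_on_le A : measurable A -> `|bochner_on mu s A| <= fine (mu A).
  move=> mA; have := bochner_bound A 0 1 mA ler01.
  by rewrite scaler0 subr0 mul1r; apply => x _; rewrite subr0.
have m_u : bochner_on mu s E = m *: u.
  apply: (extreme_point_unit_ball_split _ _ (bochner_on mu s (~` E)) _ uext).
  - by rewrite m0 m1.
  - exact: bochner_on_le E mE.
  - by rewrite -muEC; exact: bochner_on_le (~` E) mEC.
  - by rewrite (bochner_on_add_setC mu mu_fin _ _ s_meas err_meas err_cvg0 E u mE s_cvg).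
have := bochner_bound E z c mE c0 fz.
by rewrite m_u -scalerBr normrZ ger0_norm ?(ltW m0) // mulrC ler_pM2r.
Qed.

Section projective_tensor.
Context {R : realType} {X Y W : normedModType R} (t : X -> Y -> W).
Hypothesis t_bil : bilinear_map t.
Hypothesis t_norm : forall x y, `|t x y| <= `|x| * `|y|.

Lemma bilinear_mapB x x' y y' : t x y - t x' y' = t (x - x') y + t x' (y - y').
Proof.
have [t_linl t_linr] := t_bil.
have -> : t (x - x') y = t x y - t x' y.
  by have := t_linl (-1) x' x y; rewrite !scaleN1r addrC => ->; rewrite addrC.
have -> : t x' (y - y') = t x' y - t x' y'.
  by have := t_linr (-1) x' y' y; rewrite !scaleN1r addrC => ->; rewrite addrC.
by rewrite addrA subrK.
Qed.

Lemma bilinear_norm_dist_le (p q : X * Y) : `|p.1| <= 1 -> `|q.2| <= 1 ->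
  `|t q.1 q.2 - t p.1 p.2| <= 2 * `|q - p|.
Proof.
move=> p1 q2; rewrite bilinear_mapB mulr_natl mulr2n.
have dist1 : `|q.1 - p.1| <= `|q - p| by rewrite [leRHS]prod_normE le_max lexx.
have dist2 : `|q.2 - p.2| <= `|q - p| by rewrite [leRHS]prod_normE le_max lexx orbT.
apply: le_trans (ler_normD _ _) (lerD _ _); apply: le_trans (t_norm _ _) _.
- by rewrite -[leRHS]mulr1 ler_pM.
- by rewrite -[leRHS]mul1r ler_pM.
Qed.

Lemma bounded_map00 : t 0 0 = 0.
Proof.
by apply/eqP; rewrite -normr_le0; apply: le_trans (t_norm 0 0) _; rewrite normr0 mul0r.
Qed.

Lemma bilinear_norm_le1 x y : `|x| <= 1 -> `|y| <= 1 -> `|t x y| <= 1.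
Proof. by move=> x1 y1; apply: le_trans (t_norm _ _) _; rewrite -[leRHS]mulr1 ler_pM. Qed.

End projective_tensor.

Section unit_balls.
Context {R : realType} {X Y : normedModType R}.

Lemma continuous_BXY_val : continuous (sval : set_type (BXY X Y) -> X * Y).
Proof. by rewrite -set_valE; exact: initial_continuous. Qed.

Lemma BXY_hausdorff : hausdorff_space (set_type (BXY X Y)).
Proof.
apply: (hausdorff_of_continuous_inj _ continuous_BXY_val) => //.
exact: val_inj.
Qed.

Lemma open_BXY_ball (p : set_type (BXY X Y)) (r : R) :
  open (sval @^-1` ball (sval p) r : set (set_type (BXY X Y))).
Proof. by apply: open_comp => [q _|]; [exact: continuous_BXY_val | exact: ball_open]. Qed.

Lemma BXY_norm (p : set_type (BXY X Y)) : `|(sval p).1| <= 1 /\ `|(sval p).2| <= 1.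
Proof. exact: set_mem (proj2_sig p). Qed.

End unit_balls.

Theorem proposition2p15 (R : realType) (X Y Z : completeNormedModType R)
    (t : X -> Y -> Z) (u : Z)
    (mu : {measure set (BorelBXY X Y) -> \bar R}) :
  is_proj_tensor t ->
  extreme_point_unit_ball u ->
  radon_measure mu ->
  INA_witness t mu u ->
  exists (x0 : X) (y0 : Y), u = t x0 y0.
Proof.
move=> [t_bil [t_norm _]] uext [_ mu_inner _] [_ u_int mu_norm].
have [->|u0] := eqVneq u 0; first by exists 0, 0; rewrite bounded_map00.
have mu1 : mu setT = 1%:E by rewrite mu_norm (extreme_point_unit_ball_norm _ uext u0).
have mu_pos : (0 < mu setT)%E by rewrite mu1 lte01.
have [p p_supp] := exists_support_point _ mu BXY_hausdorff mu_pos (mu_inner _ measurableT).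
exists (sval p).1, (sval p).2; apply/eqP; rewrite -subr_eq0 -normr_le0.
apply/ler_addgt0Pr => e e0; rewrite add0r.
pose U : set (set_type (BXY X Y)) := sval @^-1` ball (sval p) (e / 2).
have oU : open U := open_BXY_ball p (e / 2).
have Up : U p by exact/ballxx/divr_gt0.
apply: (extreme_point_bochner_dist_le _ _ _ _ _ _ uext mu1 _ u_int _ (p_supp U oU Up) (ltW e0)).
- by move=> q; have [] := BXY_norm q; exact: bilinear_norm_le1.
- exact: sub_sigma_algebra.
move=> q Uq; have [p1 _] := BXY_norm p; have [_ q2] := BXY_norm q.
apply: le_trans (bilinear_norm_dist_le _ t_bil t_norm _ _ p1 q2) _.
move: Uq; rewrite /U /= -ball_normE /= distrC => /ltW.
by rewrite -ler_pdivlMl // mulrC.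
Qed.
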